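(* Let $n,m\ge1$, $r>0$, and let $\mathbf b_1,\dots,\mathbf b_m\in[0,\infty)^n$ be nonzero vectors with nonnegative entries. Put $D_{ij}=\frac{r}{m}(\mathbf b_i\cdot\mathbf b_j)$ for $i,j=1,\dots,m$. Then the system of equations $$\sum_{j=1}^m D_{kj}\alpha_k\alpha_j=1,\qquad k=1,\dots,m,$$ has at most one solution $(\alpha_1,\dots,\alpha_m)$ with all $\alpha_k>0$. *)

From mathcomp Require Import all_boot all_order all_algebra.
From mathcomp Require Import reals.
Set Implicit Arguments. Unset Strict Implicit. Unset Printing Implicit Defensive.
Import Order.TTheory GRing.Theory Num.Theory.
Local Open Scope ring_scope.

Definition dotp (R : realType) (n : nat) (u v : 'I_n -> R) : R :=
  \sum_(l < n) u l * v l.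

Definition Dmat (R : realType) (n m : nat) (r : R) (b : 'I_m -> 'I_n -> R)
  (i j : 'I_m) : R := r / m%:R * dotp (b i) (b j).

Definition solves (R : realType) (n m : nat) (r : R) (b : 'I_m -> 'I_n -> R)
  (alpha : 'I_m -> R) : Prop :=
  forall k : 'I_m, \sum_(j < m) Dmat r b k j * alpha k * alpha j = 1.

(** The matrix [D] is a nonnegative multiple of the Gram matrix of the
    [b_i], hence positive semidefinite.  A positive solution satisfies
    [D alpha = alpha^-1] componentwise, so for two positive solutions
    [alpha], [beta] and [d := alpha - beta],
      [0 <= d^T D d = sum_k (alpha_k - beta_k) (alpha_k^-1 - beta_k^-1)].
    Every summand on the right is [<= 0], and vanishes only when
    [alpha_k = beta_k]. *)

From mathcomp Require Import all_boot all_order all_algebra.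
From mathcomp Require Import reals.
From mathcomp Require Import ring.
From Stdlib Require Import FunctionalExtensionality.
Import Order.TTheory GRing.Theory Num.Theory.
Local Open Scope ring_scope.

Lemma subr_mul_subV_le0 (F : realFieldType) (x y : F) :
  0 < x -> 0 < y -> (x - y) * (x^-1 - y^-1) <= 0.
Proof.
move=> x_gt0 y_gt0.
have -> : (x - y) * (x^-1 - y^-1) = - ((x - y) ^+ 2 / (x * y)).
  by field; rewrite !gt_eqF.
by rewrite oppr_le0 divr_ge0 ?sqr_ge0 ?mulr_ge0 ?ltW.
Qed.

Lemma subr_mul_subV_eq0 (F : fieldType) (x y : F) :
  (x - y) * (x^-1 - y^-1) = 0 -> x = y.
Proof.
move/eqP; rewrite mulf_eq0 !subr_eq0 => /orP[/eqP // | /eqP].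
exact: invr_inj.
Qed.

Section GramSystem.

Context {R : realType} {n m : nat} {r : R} {b : 'I_m -> 'I_n -> R}.

Lemma solves_Dmat_row {g : 'I_m -> R} (k : 'I_m) : solves r b g ->
  \sum_(j < m) Dmat r b k j * g j = (g k)^-1.
Proof.
move/(_ k); rewrite (eq_bigr (fun j => g k * (Dmat r b k j * g j))).
  by rewrite -mulr_sumr => /mulr1_eq.
by move=> j _; ring.
Qed.

Lemma Dmat_quad_form (d : 'I_m -> R) :
  \sum_(k < m) d k * \sum_(j < m) Dmat r b k j * d j
  = r / m%:R * \sum_(l < n) (\sum_(k < m) d k * b k l) ^+ 2.
Proof.
transitivity (\sum_(k < m) \sum_(j < m) \sum_(l < n)
                r / m%:R * (d k * b k l) * (d j * b j l)).
  apply: eq_bigr => k _; rewrite mulr_sumr; apply: eq_bigr => j _.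
  rewrite /Dmat /dotp mulr_sumr mulr_suml mulr_sumr; apply: eq_bigr => l _; ring.
under eq_bigr do rewrite exchange_big.
rewrite exchange_big mulr_sumr; apply: eq_bigr => l _.
rewrite expr2 mulr_suml !mulr_sumr; apply: eq_bigr => k _.
rewrite !mulr_sumr; apply: eq_bigr => j _; ring.
Qed.

Lemma Dmat_quad_form_ge0 (d : 'I_m -> R) : 0 <= r ->
  0 <= \sum_(k < m) d k * \sum_(j < m) Dmat r b k j * d j.
Proof.
move=> r_ge0; rewrite Dmat_quad_form mulr_ge0 ?divr_ge0 //.
by apply: sumr_ge0 => l _; rewrite sqr_ge0.
Qed.

Lemma solves_diff_quad_form {alpha beta : 'I_m -> R} :
  solves r b alpha -> solves r b beta ->
  \sum_(k < m) (alpha k - beta k) *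
      \sum_(j < m) Dmat r b k j * (alpha j - beta j)
  = \sum_(k < m) (alpha k - beta k) * ((alpha k)^-1 - (beta k)^-1).
Proof.
move=> halpha hbeta; apply: eq_bigr => k _; congr (_ * _).
rewrite -(solves_Dmat_row k halpha) -(solves_Dmat_row k hbeta) -sumrB.
by apply: eq_bigr => j _; rewrite mulrBr.
Qed.

End GramSystem.

Theorem theorem2 (R : realType) (n m : nat) (r : R) (b : 'I_m -> 'I_n -> R)
  (hn : (1 <= n)%N) (hm : (1 <= m)%N) (hr : 0 < r)
  (hb_nonneg : forall i l, 0 <= b i l)
  (hb_nonzero : forall i, exists l, b i l != 0)
  (alpha beta : 'I_m -> R)
  (halpha_pos : forall k, 0 < alpha k) (hbeta_pos : forall k, 0 < beta k)
  (halpha : solves r b alpha) (hbeta : solves r b beta) :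
  alpha = beta.
Proof.
pose e k := (alpha k - beta k) * ((alpha k)^-1 - (beta k)^-1).
have e_le0 k : e k <= 0 by exact: subr_mul_subV_le0.
have sum_e_ge0 : 0 <= \sum_(k < m) e k.
  rewrite -(solves_diff_quad_form halpha hbeta).
  exact: Dmat_quad_form_ge0 (ltW hr).
have sum_e_eq0 : \sum_(k < m) - e k = 0.
  apply/eqP; rewrite sumrN oppr_eq0 eq_le sum_e_ge0 andbT.
  by apply: sumr_le0 => k _.
have e_eq0 k : e k = 0.
  apply: oppr_inj; rewrite oppr0.
  by apply: (psumr_eq0P _ sum_e_eq0) => // i _; rewrite oppr_ge0.
apply: functional_extensionality => k; apply: subr_mul_subV_eq0; exact: e_eq0.
Qed.
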